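(* Let $n\ge3$, $k\ge0$ with $k<n\le2k$. If $S\subseteq\mathrm{Inc}(A,B)$ is independent in $G_n^k$ and not reversible, then every strict alternating cycle contained in $S$ has size $3$.
   Context: For integers $n\ge3$, $k\ge0$, the crown $S_n^k$ is the poset with ground set $A\cup B$, $A=\{a_1,\dots,a_{n+k}\}$, $B=\{b_1,\dots,b_{n+k}\}$, indices cyclic modulo $n+k$; elements of $A$ are pairwise incomparable, as are elements of $B$, and $a_i$ is incomparable to $b_j$ when $j\in\{i,\dots,i+k\}$ (mod $n+k$), while $a_i<b_j$ otherwise. $\mathrm{Inc}(A,B)$ is the set of pairs $(a,b)\in A\times B$ with $a$ incomparable to $b$; $G_n^k$ has vertex set $\mathrm{Inc}(A,B)$ with $(a,b)$ adjacent to $(x,y)$ iff $a<y$ and $x<b$. A set $R\subseteq\mathrm{Inc}(A,B)$ is reversible if some linear extension $L$ of $S_n^k$ has $b<a$ in $L$ for all $(a,b)\in R$. An indexed set $\{(x_\alpha,y_\alpha):\alpha\in[m]\}\subseteq\mathrm{Inc}(A,B)$ is an alternating cycle of size $m$ if $x_\alpha\le y_{\alpha-1}$ for all $\alpha$ (indices cyclic mod $m$); it is strict if $x_\alpha\le y_\beta$ holds iff $\beta=\alpha-1$. *)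

From mathcomp Require Import all_boot.
Unset Implicit Arguments.

(* Crown S_n^k with N = n + k.  a_i is encoded by i : 'I_(n+k) (left
   component), b_j by j : 'I_(n+k) (right component).  *)

(* a_i < b_j in S_n^k : j is NOT in {i, ..., i+k} modulo n+k *)
Definition crown_ltAB (n k : nat) (i j : 'I_(n + k)) : bool :=
  k < (j + (n + k) - i) %% (n + k).

Definition crown_incAB (n k : nat) (i j : 'I_(n + k)) : bool :=
  ~~ crown_ltAB n k i j.

Definition crown_lt (n k : nat) (u v : 'I_(n + k) + 'I_(n + k)) : bool :=
  match u, v with
  | inl i, inr j => crown_ltAB n k i j
  | _, _ => false
  end.

(* x <= y for x in A, y in B (A, B disjoint, so <= is < ) *)
Definition crown_le (n k : nat) (x y : 'I_(n + k)) : bool :=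
  crown_lt n k (inl x) (inr y).

Definition Inc (n k : nat) : {set 'I_(n + k) * 'I_(n + k)} :=
  [set p | crown_incAB n k p.1 p.2].

Definition G_adj (n k : nat) (p q : 'I_(n + k) * 'I_(n + k)) : bool :=
  crown_ltAB n k p.1 q.2 && crown_ltAB n k q.1 p.2.

Definition G_independent (n k : nat) (S : {set 'I_(n + k) * 'I_(n + k)}) : Prop :=
  S \subset Inc n k /\
  forall p q, p \in S -> q \in S -> p != q -> ~~ G_adj n k p q.

Definition linear_extension (n k : nat) (f : 'I_(n + k) + 'I_(n + k) -> nat) : Prop :=
  injective f /\ forall u v, crown_lt n k u v -> f u < f v.

Definition reversible (n k : nat) (R : {set 'I_(n + k) * 'I_(n + k)}) : Prop :=
  exists f, linear_extension n k f /\
    forall p, p \in R -> f (inr p.2) < f (inl p.1).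

Definition cpred (m a : nat) : nat := (a + m - 1) %% m.

Definition alternating_cycle (n k m : nat) (x y : nat -> 'I_(n + k)) : Prop :=
  0 < m /\
  (forall a, a < m -> (x a, y a) \in Inc n k) /\
  (forall a b, a < m -> b < m -> (x a, y a) = (x b, y b) -> a = b) /\
  (forall a, a < m -> crown_le n k (x a) (y (cpred m a))).

Definition strict_alternating_cycle (n k m : nat) (x y : nat -> 'I_(n + k)) : Prop :=
  alternating_cycle n k m x y /\
  (forall a b, a < m -> b < m -> crown_le n k (x a) (y b) <-> b = cpred m a).

(* For a_i, the b_j incomparable to it are those with j in the cyclic arc
   [i, i + k] of Z_(n+k).  As n + k > 2k, an arc of this length containing two
   points of another such arc contains everything between them there.  A strict
   alternating cycle of size at least 4 yields y_0, y_1, y_2 in the arc of x_0,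
   and the arcs of x_1, x_2, x_3 each contain two of these points but miss y_0,
   y_1, y_2 respectively; the arc missing the middle point contradicts
   convexity.  Size 1 contradicts incomparability of (x_0, y_0), and a cycle of
   size 2 is an edge of G_n^k. *)

From mathcomp Require Import all_boot zify.

Definition cdist (N i j : nat) : nat := (j + N - i) %% N.

Section CyclicArcs.

Variable N : nat.

Lemma cdistE i j : i < N -> j < N ->
  cdist N i j = if i <= j then j - i else j + N - i.
Proof.
move=> iN jN; rewrite /cdist; case: leqP => ij.
  by rewrite -addnBAC // modnDr modn_small //; lia.
by rewrite modn_small //; lia.
Qed.

Lemma cdist_lt i j : 0 < N -> cdist N i j < N.
Proof. exact: ltn_pmod. Qed.

Lemma cdist_shift c i j : c < N -> i < N -> j < N ->
  cdist N (cdist N c i) (cdist N c j) = cdist N i j.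
Proof.
move=> cN iN jN; have N_gt0 : 0 < N by lia.
rewrite (@cdistE (cdist N c i) (cdist N c j)) ?cdist_lt // !cdistE //.
by case: (leqP c i); case: (leqP c j); case: (leqP i j); case: ifP; lia.
Qed.

Variable k : nat.
Hypothesis arc_short : 2 * k < N.

Definition in_arc (c p : nat) : bool := cdist N c p <= k.

Lemma in_arc_convex0 c a b d : c < N -> a <= k -> d <= k ->
  minn a d <= b <= maxn a d ->
  in_arc c a -> in_arc c d -> in_arc c b.
Proof.
move=> cN ak dk bad; rewrite /in_arc !cdistE //; try lia.
by case: (leqP c a); case: (leqP c b); case: (leqP c d); lia.
Qed.

Lemma in_arc_convex c0 c a b d : c0 < N -> c < N -> a < N -> b < N -> d < N ->
  in_arc c0 a -> in_arc c0 d ->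
  minn (cdist N c0 a) (cdist N c0 d) <= cdist N c0 b
    <= maxn (cdist N c0 a) (cdist N c0 d) ->
  in_arc c a -> in_arc c d -> in_arc c b.
Proof.
move=> c0N cN aN bN dN c0a c0d bad.
rewrite /in_arc -(cdist_shift c0 c a) // -(cdist_shift c0 c b) //.
rewrite -(cdist_shift c0 c d) //.
by apply: in_arc_convex0 => //; apply: cdist_lt; lia.
Qed.

Lemma no_three_separating_arcs c0 c1 c2 c3 p1 p2 p3 :
  c0 < N -> c1 < N -> c2 < N -> c3 < N -> p1 < N -> p2 < N -> p3 < N ->
  in_arc c0 p1 -> in_arc c0 p2 -> in_arc c0 p3 ->
  in_arc c1 p2 -> in_arc c1 p3 -> in_arc c2 p1 -> in_arc c2 p3 ->
  in_arc c3 p1 -> in_arc c3 p2 ->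
  ~~ in_arc c1 p1 -> ~~ in_arc c2 p2 -> ~~ in_arc c3 p3 -> False.
Proof.
move=> c0N c1N c2N c3N p1N p2N p3N c0p1 c0p2 c0p3 c1p2 c1p3 c2p1 c2p3 c3p1 c3p2.
move=> /negP c1p1 /negP c2p2 /negP c3p3.
set q1 := cdist N c0 p1; set q2 := cdist N c0 p2; set q3 := cdist N c0 p3.
have [m1|[m2|m3]] : minn q2 q3 <= q1 <= maxn q2 q3 \/
                    minn q1 q3 <= q2 <= maxn q1 q3 \/
                    minn q1 q2 <= q3 <= maxn q1 q2 by lia.
- by apply: c1p1; apply: (@in_arc_convex c0 c1 p2 p1 p3).
- by apply: c2p2; apply: (@in_arc_convex c0 c2 p1 p2 p3).
- by apply: c3p3; apply: (@in_arc_convex c0 c3 p1 p3 p2).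
Qed.

End CyclicArcs.

Lemma cpredE m a : a < m -> cpred m a = if a is a'.+1 then a' else m.-1.
Proof.
rewrite /cpred; case: a => [|a] am.
  by rewrite add0n subn1 modn_small //; lia.
have -> : a.+1 + m - 1 = a + m by lia.
by rewrite modnDr modn_small //; lia.
Qed.

Section CrownCycles.

Context {n k : nat}.

Lemma crown_leE i j : crown_le n k i j = ~~ in_arc (n + k) k i j.
Proof. by rewrite /in_arc -ltnNge. Qed.

Lemma alternating_cycle_gt1 {m x y} : alternating_cycle n k m x y -> 1 < m.
Proof.
case=> m_gt0 [inc [_ alt]]; rewrite ltn_neqAle m_gt0 andbT.
apply/eqP=> m1; subst m.
by move: (inc 0 isT) (alt 0 isT); rewrite inE /crown_incAB => /negP.
Qed.

Lemma alternating_2cycle_adj {x y} :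
  alternating_cycle n k 2 x y -> G_adj n k (x 0, y 0) (x 1, y 1).
Proof. by case=> _ [_ [_ alt]]; apply/andP; split; [apply: (alt 0) | apply: (alt 1)]. Qed.

Lemma G_independent_no_2cycle {S x y} : G_independent n k S ->
  alternating_cycle n k 2 x y -> (forall a, a < 2 -> (x a, y a) \in S) -> False.
Proof.
move=> [_ indep] cyc inS; have [_ [_ [inj _]]] := cyc.
have neq : (x 0, y 0) != (x 1, y 1) by apply/eqP => /(inj 0 1 isT isT).
by move: (indep _ _ (inS 0 isT) (inS 1 isT) neq); rewrite alternating_2cycle_adj.
Qed.

Lemma strict_alternating_cycle_in_arc {m x y} :
  strict_alternating_cycle n k m x y -> forall a b, a < m -> b < m ->
  in_arc (n + k) k (x a) (y b) = (b != cpred m a).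
Proof.
case=> _ str a b am bm; rewrite -[in_arc _ _ _ _]negbK -crown_leE; congr negb.
by apply/idP/eqP => /(str a b am bm).
Qed.

Lemma strict_alternating_cycle_le3 {m x y} : k < n ->
  strict_alternating_cycle n k m x y -> m <= 3.
Proof.
move=> k_lt_n cyc; rewrite leqNgt; apply/negP => m_gt3.
have arcs a b : a < 4 -> b < 4 -> in_arc (n + k) k (x a) (y b) = (b != cpred m a).
  by move=> a4 b4; apply: (strict_alternating_cycle_in_arc cyc); lia.
apply: (@no_three_separating_arcs (n + k) k _ (x 0) (x 1) (x 2) (x 3) (y 0) (y 1) (y 2));
  rewrite ?ltn_ord ?arcs // ?cpredE //; lia.
Qed.

End CrownCycles.

Theorem proposition5p1 (n k : nat) (S : {set 'I_(n + k) * 'I_(n + k)}) :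
  3 <= n -> k < n -> n <= 2 * k ->
  G_independent n k S -> ~ reversible n k S ->
  forall (m : nat) (x y : nat -> 'I_(n + k)),
    strict_alternating_cycle n k m x y ->
    (forall a, a < m -> (x a, y a) \in S) ->
    m = 3.
Proof.
move=> _ k_lt_n _ indep _ m x y cyc inS.
have m_gt1 := alternating_cycle_gt1 cyc.1.
have m_le3 := strict_alternating_cycle_le3 k_lt_n cyc.
case: m m_gt1 m_le3 cyc inS => [|[|[|[|m]]]] // _ _ cyc inS.
by case: (G_independent_no_2cycle indep cyc.1 inS).
Qed.
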